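(* (a) For all $\beta,\eta,\hat v(0)>0$ and $\mu\in\mathbb{R}$, the equation $$\sum_{p\in\Lambda^*}\frac{1}{e^{\beta(p^2-\widetilde\mu)}-1}=\frac{(\mu-\widetilde\mu)\eta}{\hat v(0)}$$ has a unique solution $\widetilde\mu\in(-\infty,0)$. (b) Fix $\kappa\in(0,\infty)$, $\hat v(0)>0$ and $c_0\in(0,1]$, and let $\beta=\kappa\beta_{\mathrm c}(\eta)$ with $\beta_{\mathrm c}(\eta)=\frac{1}{4\pi}\big(\frac{\eta}{\zeta(3/2)}\big)^{-2/3}$. There exist constants $c\in(0,1]$, $C>0$ and $\eta_0>0$ (depending on $\kappa,\hat v(0),c_0$) such that for all $\eta\ge\eta_0$ and all $\mu$ with $-c_0^{-1}\eta^{2/3}\le\mu\le c_0^{-1}$, the solution $\widetilde\mu$ of (a) satisfies $c\le\mu-\widetilde\mu\le c^{-1}$; moreover $-\widetilde\mu\le C$ if $\mu\ge0$, and $-\widetilde\mu\le C\eta^{2/3}$ if $\mu<0$. (c) Under the assumptions of (b), possibly after decreasing $c$, $\;c\eta\le\sum_{p\in\Lambda^*}\frac{1}{e^{\beta(p^2-\widetilde\mu)}-1}\le c^{-1}\eta$.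
   Context: $\Lambda^*=2\pi\mathbb{Z}^3$ (the dual lattice of the unit torus $[0,1]^3$); $\zeta$ is the Riemann zeta function; $\hat v(0)>0$ is a given positive constant. *)

From Stdlib Require Import Reals ZArith.
From Coquelicot Require Import Coquelicot.
Open Scope R_scope.

(* Bose-Einstein summand at p = 2*pi*(n1,n2,n3) in the dual lattice 2 pi Z^3:
   1 / (exp(beta (p^2 - m)) - 1). *)
Definition bose_term (beta m : R) (n1 n2 n3 : Z) : R :=
  / (exp (beta * ((2 * PI) ^ 2 * IZR (n1 * n1 + n2 * n2 + n3 * n3) - m)) - 1).

Definition box_sum (beta m : R) (N : nat) : R :=
  sum_f_R0 (fun i =>
    sum_f_R0 (fun j =>
      sum_f_R0 (fun k =>
        bose_term beta m (Z.of_nat i - Z.of_nat N)%Z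
                         (Z.of_nat j - Z.of_nat N)%Z
                         (Z.of_nat k - Z.of_nat N)%Z) (2 * N)) (2 * N)) (2 * N).

(* sum_{p in Lambda^*} 1/(exp(beta(p^2 - m)) - 1): limit of cube partial sums
   (all terms are positive when m < 0, so this is the unconditional sum). *)
Definition lattice_sum (beta m : R) : R := real (Lim_seq (box_sum beta m)).

Definition zeta32 : R := Series (fun n => / Rpower (INR n + 1) (3 / 2)).

Definition beta_c (eta : R) : R := / (4 * PI) * Rpower (eta / zeta32) (- (2 / 3)).

(* Expanding [1 / (e^y - 1) = sum_(k >= 1) e^(-k y)] factorizes the lattice sum into
   cubes of one-dimensional theta sums [theta(s) = sum_j e^(-s j^2) <= e (1 + s^(-1/2))];
   summing over [k] gives [sum_p <= C (1 / (e^(-beta mt) - 1) + beta^(-3/2))], while the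
   box of side [beta^(-1/2)] gives [sum_p >= c e^(beta mt) beta^(-3/2)].  Hence the sum
   is finite, nondecreasing and locally Lipschitz in [mt < 0], blows up as [mt -> 0] and
   stays bounded as [mt -> -oo]: the gap equation has exactly one root.  At
   [beta = kappa beta_c(eta)] one has [beta^(-3/2) ~ eta] and [beta eta^(2/3)] constant,
   so the two bounds turn the gap equation into two-sided bounds on [mu - mt]. *)

From Stdlib Require Import Reals ZArith Lra Lia Psatz.
From Coquelicot Require Import Coquelicot.
Open Scope R_scope.

Lemma exp_le_exp x y : x <= y -> exp x <= exp y.
Proof.
  intro Hxy. destruct (Req_dec x y) as [->|Hne]; [lra|].
  left; apply exp_increasing; lra.
Qed.

Lemma exp_sub1_le_mul_exp d : 0 <= d -> exp d - 1 <= d * exp d.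
Proof.
  intro Hd. pose proof (exp_ineq1_le (- d)) as H. rewrite exp_Ropp in H.
  pose proof (exp_pos d).
  apply (Rmult_le_compat_r (exp d)) in H; [|lra]. rewrite Rinv_l in H by lra. lra.
Qed.

Definition bose (y : R) : R := / (exp y - 1).

Lemma bose_gt0 y : 0 < y -> 0 < bose y.
Proof.
  intro Hy. apply Rinv_0_lt_compat. pose proof (exp_ineq1 y ltac:(lra)). lra.
Qed.

Lemma bose_le_contravar y z : 0 < y -> y <= z -> bose z <= bose y.
Proof.
  intros Hy Hyz. pose proof (exp_ineq1 y ltac:(lra)). pose proof (exp_le_exp y z Hyz).
  apply Rinv_le_contravar; lra.
Qed.

Lemma exp_opp_le_bose y : 0 < y -> exp (- y) <= bose y.
Proof.
  intro Hy. unfold bose. rewrite exp_Ropp. pose proof (exp_ineq1 y ltac:(lra)).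
  apply Rinv_le_contravar; lra.
Qed.

Lemma bose_le_inv y : 0 < y -> bose y <= / y.
Proof.
  intro Hy. pose proof (exp_ineq1 y ltac:(lra)). apply Rinv_le_contravar; lra.
Qed.

Lemma inv_sub1_le_bose y : 0 < y -> / y - 1 <= bose y.
Proof.
  intro Hy. pose proof (exp_ineq1 y ltac:(lra)). pose proof (exp_pos y).
  pose proof (exp_sub1_le_mul_exp y ltac:(lra)).
  pose proof (exp_ineq1_le (- y)) as Hm. rewrite exp_Ropp in Hm.
  apply Rle_trans with (/ exp y * / y).
  - apply (Rmult_le_reg_l y); [lra|].
    replace (y * (/ y - 1)) with (1 - y) by (field; lra).
    replace (y * (/ exp y * / y)) with (/ exp y) by (field; lra). lra.
  - rewrite <- Rinv_mult. apply Rinv_le_contravar; nra.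
Qed.

Lemma bose_geometric y K : 0 < y ->
  sum_f_R0 (fun k => exp (- (INR k + 1) * y)) K + exp (- (INR K + 1) * y) * bose y = bose y.
Proof.
  intro Hy. unfold bose. pose proof (exp_ineq1 y ltac:(lra)).
  assert (Hstep : forall c, exp (- c * y) * / (exp y - 1) =
     exp (- (c + 1) * y) + exp (- (c + 1) * y) * / (exp y - 1)).
  { intro c. replace (- c * y) with (- (c + 1) * y + y) by ring.
    rewrite exp_plus. field. lra. }
  induction K as [|K IH].
  - simpl. rewrite <- Hstep. replace (- 0 * y) with 0 by ring. rewrite exp_0. ring.
  - rewrite tech5. rewrite <- IH at 2. rewrite (Hstep (INR K + 1)), S_INR. ring.
Qed.

Lemma bose_sub_le y d : 0 < y -> 0 <= d ->
  bose y - bose (y + d) <= (exp d - 1) * (bose y * (1 + bose y)).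
Proof.
  intros Hy Hd. unfold bose. rewrite exp_plus.
  pose proof (exp_ineq1 y ltac:(lra)). pose proof (exp_ineq1_le d).
  set (u := exp y) in *. set (e := exp d) in *.
  assert (u - 1 <= u * e - 1) by nra.
  replace (/ (u - 1) - / (u * e - 1)) with (u * (e - 1) / ((u - 1) * (u * e - 1)))
    by (field; split; nra).
  replace ((e - 1) * (/ (u - 1) * (1 + / (u - 1)))) with (u * (e - 1) / ((u - 1) * (u - 1)))
    by (field; lra).
  apply Rmult_le_compat_l; [nra|]. apply Rinv_le_contravar; nra.
Qed.

Definition zsum (N : nat) (h : Z -> R) : R :=
  sum_f_R0 (fun i => h (Z.of_nat i - Z.of_nat N)%Z) (2 * N).

Lemma zsum_le_on N h g :
  (forall a, (- Z.of_nat N <= a <= Z.of_nat N)%Z -> h a <= g a) -> zsum N h <= zsum N g.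
Proof. intro H. apply sum_Rle. intros i Hi. apply H. lia. Qed.

Lemma zsum_le N h g : (forall a, h a <= g a) -> zsum N h <= zsum N g.
Proof. intro H. apply zsum_le_on. intros a _. apply H. Qed.

Lemma zsum_ge0 N h : (forall a, 0 <= h a) -> 0 <= zsum N h.
Proof. intro H. apply cond_pos_sum. intro; apply H. Qed.

Lemma zsum_scal N c h : zsum N (fun a => c * h a) = c * zsum N h.
Proof. unfold zsum. rewrite scal_sum. apply sum_eq. intros; ring. Qed.

Lemma zsum_plus N h g : zsum N (fun a => h a + g a) = zsum N h + zsum N g.
Proof. apply sum_plus. Qed.

Lemma zsum_const N c : zsum N (fun _ => c) = INR (2 * N + 1) * c.
Proof. unfold zsum. rewrite sum_cte, Nat.add_1_r. ring. Qed.

Lemma zsum_sum N K (F : nat -> Z -> R) :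
  zsum N (fun a => sum_f_R0 (fun k => F k a) K) = sum_f_R0 (fun k => zsum N (F k)) K.
Proof.
  induction K as [|K IH]; [reflexivity|]. simpl. rewrite zsum_plus, IH. reflexivity.
Qed.

Lemma zsum_S N h : zsum (S N) h = h (- Z.of_nat (S N))%Z + zsum N h + h (Z.of_nat (S N)).
Proof.
  unfold zsum. replace (2 * S N)%nat with (S (S (2 * N))) by lia.
  rewrite tech5, decomp_sum by lia. simpl pred.
  replace (Z.of_nat 0 - Z.of_nat (S N))%Z with (- Z.of_nat (S N))%Z by lia.
  replace (Z.of_nat (S (S (2 * N))) - Z.of_nat (S N))%Z with (Z.of_nat (S N)) by lia.
  assert (Hshift : sum_f_R0 (fun i => h (Z.of_nat (S i) - Z.of_nat (S N))%Z) (2 * N) =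
     sum_f_R0 (fun i => h (Z.of_nat i - Z.of_nat N)%Z) (2 * N)).
  { apply sum_eq. intros i _. f_equal. lia. }
  change (N + (N + 0))%nat with (2 * N)%nat. rewrite Hshift. reflexivity.
Qed.

Lemma zsum_le_S N h g : (forall a, 0 <= h a) -> (forall a, g a <= h a) ->
  zsum N g <= zsum (S N) h.
Proof.
  intros H0 Hgh. rewrite zsum_S. pose proof (zsum_le N g h Hgh).
  pose proof (H0 (- Z.of_nat (S N))%Z). pose proof (H0 (Z.of_nat (S N))). lra.
Qed.

Lemma zsum_exp_abs_le N c : 0 < c ->
  zsum N (fun j => exp (- c * Rabs (IZR j))) <= 1 + 2 / (exp c - 1).
Proof.
  intro Hc. pose proof (exp_ineq1 c ltac:(lra)). pose proof (exp_pos c).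
  set (r := exp (- c)).
  assert (Hr : r = / exp c) by apply exp_Ropp.
  assert (Hr1 : r < 1) by (rewrite Hr, <- Rinv_1; apply Rinv_lt_contravar; lra).
  assert (Hr0 : 0 < r) by apply exp_pos.
  (* the partial sums miss exactly the two geometric tails *)
  assert (Hsharp : forall M, zsum M (fun j => exp (- c * Rabs (IZR j))) <=
     (1 + r) / (1 - r) - 2 * exp (- c * (INR M + 1)) / (1 - r)).
  { induction M as [|M IH].
    - unfold zsum. simpl. rewrite Rabs_R0. replace (- c * 0) with 0 by ring.
      replace (- c * (0 + 1)) with (- c) by ring. rewrite exp_0. fold r.
      apply Req_le. field. lra.
    - rewrite zsum_S, opp_IZR, Rabs_Ropp, <- INR_IZR_INZ, Rabs_pos_eq by apply pos_INR.
      rewrite S_INR. replace (- c * (INR M + 1 + 1)) with (- c * (INR M + 1) + - c) by ring.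
      rewrite exp_plus. fold r. set (E := exp (- c * (INR M + 1))) in *.
      assert (2 * E + ((1 + r) / (1 - r) - 2 * E / (1 - r)) =
        (1 + r) / (1 - r) - 2 * (E * r) / (1 - r)) by (field; lra).
      lra. }
  assert (Htail : 0 <= 2 * exp (- c * (INR N + 1)) / (1 - r)).
  { apply Rmult_le_pos; [pose proof (exp_pos (- c * (INR N + 1))); lra|].
    left; apply Rinv_0_lt_compat; lra. }
  assert (Hclosed : (1 + r) / (1 - r) = 1 + 2 / (exp c - 1)).
  { rewrite Hr. field. split; [lra|]. intro Hx.
    assert (exp c * (1 - / exp c) = exp c - 1) by (field; lra). nra. }
  specialize (Hsharp N). lra.
Qed.

Definition gauss (s : R) (j : Z) : R := exp (- s * (IZR j * IZR j)).

Definition theta (N : nat) (s : R) : R := zsum N (gauss s).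

Lemma theta_ge0 N s : 0 <= theta N s.
Proof. apply zsum_ge0. intro; left; apply exp_pos. Qed.

(* Compare the Gaussian with a two-sided geometric series: [s j^2 >= 2 sqrt s |j| - 1]. *)
Lemma theta_le N s : 0 < s -> theta N s <= exp 1 * (1 + / sqrt s).
Proof.
  intro Hs.
  assert (Hsq : 0 < sqrt s) by (apply sqrt_lt_R0; lra).
  assert (Hss : sqrt s * sqrt s = s) by (apply sqrt_sqrt; lra).
  apply Rle_trans with (zsum N (fun j => exp 1 * exp (- (2 * sqrt s) * Rabs (IZR j)))).
  { apply zsum_le. intro a. unfold gauss. rewrite <- exp_plus. apply exp_le_exp.
    assert (IZR a * IZR a = Rabs (IZR a) * Rabs (IZR a)) as ->.
    { rewrite <- Rabs_mult, Rabs_pos_eq; nra. }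
    set (v := Rabs (IZR a)). set (t := sqrt s) in *.
    assert (s * (v * v) = (t * v) * (t * v)) by (rewrite <- Hss; ring).
    pose proof (Rle_0_sqr (t * v - 1)). unfold Rsqr in *. nra. }
  rewrite zsum_scal. apply Rmult_le_compat_l; [left; apply exp_pos|].
  eapply Rle_trans; [apply zsum_exp_abs_le; lra|].
  pose proof (exp_ineq1_le (2 * sqrt s)).
  assert (2 / (exp (2 * sqrt s) - 1) <= 2 / (2 * sqrt s)).
  { apply Rmult_le_compat_l; [lra|]. apply Rinv_le_contravar; lra. }
  replace (2 / (2 * sqrt s)) with (/ sqrt s) in * by (field; lra). lra.
Qed.

Lemma theta_cube_le N s : 0 < s ->
  theta N s ^ 3 <= 4 * exp 1 ^ 3 * (1 + / (s * sqrt s)).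
Proof.
  intro Hs. assert (Hsq : 0 < sqrt s) by (apply sqrt_lt_R0; lra).
  set (u := / sqrt s). assert (Hu : 0 < u) by (apply Rinv_0_lt_compat; lra).
  assert (Hu3 : u ^ 3 = / (s * sqrt s)).
  { unfold u. rewrite <- (sqrt_sqrt s) at 2 by lra. simpl. field. lra. }
  assert (Hcube : (1 + u) ^ 3 <= 4 * (1 + u ^ 3)).
  { assert (0 <= (1 - u) ^ 2 * (1 + u)) by (apply Rmult_le_pos; [apply pow2_ge_0|lra]).
    assert ((1 + u) ^ 3 = 4 * (1 + u ^ 3) - 3 * ((1 - u) ^ 2 * (1 + u))) by ring. lra. }
  apply Rle_trans with ((exp 1 * (1 + u)) ^ 3).
  - apply pow_incr. split; [apply theta_ge0|apply theta_le; lra].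
  - rewrite Rpow_mult_distr, <- Hu3.
    assert (0 < exp 1 ^ 3) by (apply pow_lt, exp_pos). nra.
Qed.

Lemma sum_inv_pow32_le K :
  sum_f_R0 (fun k => / ((INR k + 1) * sqrt (INR k + 1))) K <= 3 - 2 / sqrt (INR K + 1).
Proof.
  induction K as [|K IH].
  - simpl. rewrite Rplus_0_l, sqrt_1. lra.
  - rewrite tech5, S_INR. pose proof (pos_INR K).
    set (a := sqrt (INR K + 1)) in *. set (b := sqrt (INR K + 1 + 1)).
    assert (Ha : 0 < a) by (apply sqrt_lt_R0; lra).
    assert (Hb : 0 < b) by (apply sqrt_lt_R0; lra).
    assert (Ea : a * a = INR K + 1) by (apply sqrt_sqrt; lra).
    assert (Eb : b * b = INR K + 1 + 1) by (apply sqrt_sqrt; lra).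
    assert (Hab : a <= b) by (apply sqrt_le_1_alt; lra).
    (* telescoping: [1 / b^3 <= 2 / a - 2 / b] *)
    assert (/ ((INR K + 1 + 1) * b) <= 2 / a - 2 / b).
    { rewrite <- Eb. assert (Hba : (b - a) * (a + b) = 1) by nra.
      replace (2 / a - 2 / b) with (2 * (b - a) / (a * b)) by (field; lra).
      apply (Rmult_le_reg_l (a * b * b * b)); [apply Rmult_lt_0_compat; nra|].
      replace (a * b * b * b * / (b * b * b)) with a by (field; lra).
      replace (a * b * b * b * (2 * (b - a) / (a * b))) with (2 * (b - a) * (b * b))
        by (field; lra).
      assert (0 <= (b - a) * (2 * (b * b) - a * a - a * b)) by (apply Rmult_le_pos; nra).
      nra. }
    lra.
Qed.

Definition lattice_scale : R := (2 * PI) ^ 2.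

Definition sq_norm (a b c : Z) : R := IZR (a * a + b * b + c * c).

Lemma lattice_scale_gt0 : 0 < lattice_scale.
Proof. unfold lattice_scale. pose proof PI_RGT_0. nra. Qed.

Lemma sq_norm_ge0 a b c : 0 <= sq_norm a b c.
Proof. apply IZR_le. nia. Qed.

Lemma sq_norm_eq a b c : sq_norm a b c = IZR a * IZR a + IZR b * IZR b + IZR c * IZR c.
Proof. unfold sq_norm. rewrite !plus_IZR, !mult_IZR. ring. Qed.

Lemma bose_term_eq b m a0 b0 c0 :
  bose_term b m a0 b0 c0 = bose (b * (lattice_scale * sq_norm a0 b0 c0 - m)).
Proof. reflexivity. Qed.

Lemma box_sum_eq b m N :
  box_sum b m N = zsum N (fun a => zsum N (fun a' => zsum N (fun a'' => bose_term b m a a' a''))).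
Proof. reflexivity. Qed.

Lemma bose_term_arg_ge b m a0 b0 c0 : 0 < b ->
  - b * m <= b * (lattice_scale * sq_norm a0 b0 c0 - m).
Proof.
  intro Hb. pose proof (sq_norm_ge0 a0 b0 c0). pose proof lattice_scale_gt0.
  assert (0 <= b * (lattice_scale * sq_norm a0 b0 c0)) by (apply Rmult_le_pos; nra). nra.
Qed.

Lemma bose_term_gt0 b m a0 b0 c0 : 0 < b -> m < 0 -> 0 < bose_term b m a0 b0 c0.
Proof.
  intros Hb Hm. rewrite bose_term_eq. apply bose_gt0.
  pose proof (bose_term_arg_ge b m a0 b0 c0 Hb). nra.
Qed.

Lemma bose_term_le_geometric b m K a0 b0 c0 : 0 < b -> m < 0 ->
  let s k := (INR k + 1) * (b * lattice_scale) in
  bose_term b m a0 b0 c0 <=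
  sum_f_R0 (fun k => exp (- (INR k + 1) * (- b * m)) * gauss (s k) a0 * gauss (s k) b0
                       * gauss (s k) c0) K
  + exp (- (INR K + 1) * (- b * m)) * bose (- b * m).
Proof.
  intros Hb Hm s. rewrite bose_term_eq.
  pose proof (bose_term_arg_ge b m a0 b0 c0 Hb).
  set (x := - b * m) in *. assert (Hx : 0 < x) by (unfold x; nra).
  set (y := b * (lattice_scale * sq_norm a0 b0 c0 - m)) in *.
  rewrite <- (bose_geometric y K) by lra.
  apply Rplus_le_compat.
  - right. apply sum_eq. intros k _. unfold gauss, s. rewrite <- !exp_plus. f_equal.
    unfold y, x. rewrite sq_norm_eq. ring.
  - apply Rmult_le_compat.
    + left; apply exp_pos.
    + left; apply bose_gt0; lra.
    + apply exp_le_exp. pose proof (pos_INR K). nra.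
    + apply bose_le_contravar; lra.
Qed.

Lemma zsum_affine N K (c : nat -> R) (G : nat -> Z -> R) d :
  zsum N (fun z => sum_f_R0 (fun k => c k * G k z) K + d) =
  sum_f_R0 (fun k => c k * zsum N (G k)) K + INR (2 * N + 1) * d.
Proof.
  rewrite zsum_plus, zsum_const, (zsum_sum N K (fun k z => c k * G k z)).
  f_equal. apply sum_eq. intros. apply zsum_scal.
Qed.

(* Expanding [bose] geometrically factorizes the box sum into cubes of theta sums. *)
Lemma box_sum_le_theta b m N K : 0 < b -> m < 0 ->
  let s k := (INR k + 1) * (b * lattice_scale) in
  box_sum b m N <=
  sum_f_R0 (fun k => exp (- (INR k + 1) * (- b * m)) * theta N (s k) ^ 3) K
  + INR (2 * N + 1) ^ 3 * (exp (- (INR K + 1) * (- b * m)) * bose (- b * m)).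
Proof.
  intros Hb Hm s. rewrite box_sum_eq.
  set (n := INR (2 * N + 1)). set (tail := exp (- (INR K + 1) * (- b * m)) * bose (- b * m)).
  set (A k := exp (- (INR k + 1) * (- b * m))). set (G k := gauss (s k)).
  assert (Htheta : forall k, zsum N (G k) = theta N (s k)) by reflexivity.
  assert (H1 : forall a0 b0, zsum N (fun c0 => bose_term b m a0 b0 c0) <=
      sum_f_R0 (fun k => (A k * G k a0 * theta N (s k)) * G k b0) K + n * tail).
  { intros a0 b0. eapply Rle_trans.
    { apply zsum_le. intro c0. apply (bose_term_le_geometric b m K a0 b0 c0 Hb Hm). }
    eapply Rle_trans;
      [right; exact (zsum_affine N K (fun k => A k * G k a0 * G k b0) G tail)|].
    right. f_equal. apply sum_eq. intros k _. rewrite Htheta. ring. }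
  assert (H2 : forall a0, zsum N (fun b0 => zsum N (fun c0 => bose_term b m a0 b0 c0)) <=
      sum_f_R0 (fun k => (A k * theta N (s k) ^ 2) * G k a0) K + n * (n * tail)).
  { intros a0. eapply Rle_trans; [apply zsum_le; intro b0; apply H1|].
    eapply Rle_trans;
      [right; exact (zsum_affine N K (fun k => A k * G k a0 * theta N (s k)) G (n * tail))|].
    right. f_equal. apply sum_eq. intros k _. rewrite Htheta. ring. }
  eapply Rle_trans; [apply zsum_le; intro a0; apply H2|].
  eapply Rle_trans;
    [right; exact (zsum_affine N K (fun k => A k * theta N (s k) ^ 2) G (n * (n * tail)))|].
  right. replace (n ^ 3 * tail) with (n * (n * (n * tail))) by ring.
  f_equal. apply sum_eq. intros k _. rewrite Htheta. unfold A. ring.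
Qed.

Lemma theta_cube_weighted_le N P x k : 0 < P -> 0 < x ->
  exp (- (INR k + 1) * x) * theta N ((INR k + 1) * P) ^ 3 <=
  exp (- (INR k + 1) * x) * (4 * exp 1 ^ 3)
  + / ((INR k + 1) * sqrt (INR k + 1)) * (4 * exp 1 ^ 3 / (P * sqrt P)).
Proof.
  intros HP Hx. pose proof (pos_INR k).
  assert (HsP : 0 < sqrt P) by (apply sqrt_lt_R0; lra).
  assert (Hsqk : 0 < sqrt (INR k + 1)) by (apply sqrt_lt_R0; lra).
  assert (Hsk : 0 < (INR k + 1) * P) by nra.
  set (e3 := exp 1 ^ 3). assert (He3 : 0 < e3) by (apply pow_lt, exp_pos).
  set (Q := / (P * sqrt P) * / ((INR k + 1) * sqrt (INR k + 1))).
  assert (HQ : 0 <= Q).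
  { apply Rmult_le_pos; left; apply Rinv_0_lt_compat, Rmult_lt_0_compat; lra. }
  pose proof (theta_cube_le N _ Hsk) as Hth.
  replace (/ ((INR k + 1) * P * sqrt ((INR k + 1) * P))) with Q in Hth
    by (unfold Q; rewrite sqrt_mult by lra; field; split; lra).
  fold e3 in Hth.
  replace (/ ((INR k + 1) * sqrt (INR k + 1)) * (4 * e3 / (P * sqrt P))) with (4 * e3 * Q)
    by (unfold Q, Rdiv; ring).
  set (A := exp (- (INR k + 1) * x)).
  assert (HA : 0 < A <= 1).
  { split; [apply exp_pos|]. apply Rle_trans with (exp 0); [apply exp_le_exp; nra|].
    rewrite exp_0; lra. }
  apply Rle_trans with (A * (4 * e3 * (1 + Q))); [apply Rmult_le_compat_l; lra|].
  assert (A * (4 * e3 * Q) <= 1 * (4 * e3 * Q)) by (apply Rmult_le_compat_r; nra).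
  lra.
Qed.

Lemma theta_series_le N P x K : 0 < P -> 0 < x ->
  sum_f_R0 (fun k => exp (- (INR k + 1) * x) * theta N ((INR k + 1) * P) ^ 3) K <=
  4 * exp 1 ^ 3 * bose x + 12 * exp 1 ^ 3 / (P * sqrt P).
Proof.
  intros HP Hx. assert (HsP : 0 < sqrt P) by (apply sqrt_lt_R0; lra).
  set (e3 := exp 1 ^ 3). assert (He3 : 0 < e3) by (apply pow_lt, exp_pos).
  eapply Rle_trans; [apply sum_Rle; intros k _; apply (theta_cube_weighted_le N P x k HP Hx)|].
  rewrite sum_plus, <- !scal_sum.
  pose proof (bose_geometric x K Hx).
  assert (0 <= exp (- (INR K + 1) * x) * bose x)
    by (apply Rmult_le_pos; left; [apply exp_pos|apply bose_gt0; lra]).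
  pose proof (sum_inv_pow32_le K).
  assert (0 < / sqrt (INR K + 1))
    by (apply Rinv_0_lt_compat, sqrt_lt_R0; pose proof (pos_INR K); lra).
  assert (0 < 4 * e3 / (P * sqrt P)) by (apply Rdiv_lt_0_compat; nra).
  replace (12 * e3 / (P * sqrt P)) with (4 * e3 / (P * sqrt P) * 3) by (field; lra).
  apply Rplus_le_compat; apply Rmult_le_compat_l; unfold Rdiv in *; lra.
Qed.

Definition lattice_majorant (b m : R) : R :=
  4 * exp 1 ^ 3 * bose (- b * m)
  + 12 * exp 1 ^ 3 / (b * lattice_scale * sqrt (b * lattice_scale)).

Lemma box_sum_le_majorant b m N : 0 < b -> m < 0 -> box_sum b m N <= lattice_majorant b m.
Proof.
  intros Hb Hm. apply Rle_plus_epsilon. intros eps Heps.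
  set (x := - b * m). assert (Hx : 0 < x) by (unfold x; nra).
  set (n := INR (2 * N + 1)). pose proof (bose_gt0 x Hx).
  assert (Hn : 0 < n ^ 3) by (apply pow_lt, lt_0_INR; lia).
  destruct (INR_archimed x (n ^ 3 * bose x / eps) Hx) as [K HK].
  assert (Htail : n ^ 3 * (exp (- (INR K + 1) * x) * bose x) <= eps).
  { replace (- (INR K + 1) * x) with (- ((INR K + 1) * x)) by ring. rewrite exp_Ropp.
    pose proof (exp_ineq1_le ((INR K + 1) * x)). pose proof (exp_pos ((INR K + 1) * x)).
    assert (n ^ 3 * bose x < eps * exp ((INR K + 1) * x)).
    { apply (Rmult_lt_reg_r (/ eps)); [apply Rinv_0_lt_compat; lra|].
      replace (eps * exp ((INR K + 1) * x) * / eps) with (exp ((INR K + 1) * x))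
        by (field; lra).
      unfold Rdiv in HK. nra. }
    apply (Rmult_le_reg_r (exp ((INR K + 1) * x))); [lra|].
    replace (n ^ 3 * (/ exp ((INR K + 1) * x) * bose x) * exp ((INR K + 1) * x))
      with (n ^ 3 * bose x) by (field; lra). lra. }
  pose proof (box_sum_le_theta b m N K Hb Hm) as Hbox.
  assert (HP : 0 < b * lattice_scale) by (pose proof lattice_scale_gt0; nra).
  pose proof (theta_series_le N (b * lattice_scale) x K HP Hx) as Hser.
  cbv zeta in Hbox. fold x n in Hbox. unfold lattice_majorant. fold x. lra.
Qed.

Lemma box_sum_le_S b m N : 0 < b -> m < 0 -> box_sum b m N <= box_sum b m (S N).
Proof.
  intros Hb Hm. rewrite !box_sum_eq.
  assert (Hpos : forall a a' a'', 0 <= bose_term b m a a' a'')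
    by (intros; left; apply bose_term_gt0; auto).
  apply zsum_le_S; [intro; apply zsum_ge0; intro; apply zsum_ge0; auto|intro a].
  apply zsum_le_S; [intro; apply zsum_ge0; auto|intro a'].
  apply zsum_le_S; [auto|intro; lra].
Qed.

Lemma lattice_sum_is_lim b m : 0 < b -> m < 0 -> is_lim_seq (box_sum b m) (lattice_sum b m).
Proof.
  intros Hb Hm.
  destruct (ex_finite_lim_seq_incr (box_sum b m) (lattice_majorant b m)) as [l Hl].
  - intro; apply box_sum_le_S; auto.
  - intro; apply box_sum_le_majorant; auto.
  - unfold lattice_sum. rewrite (is_lim_seq_unique _ _ Hl). exact Hl.
Qed.

Lemma box_sum_le_lattice_sum b m N : 0 < b -> m < 0 -> box_sum b m N <= lattice_sum b m.
Proof.
  intros Hb Hm. apply (is_lim_seq_incr_compare (box_sum b m)).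
  - apply lattice_sum_is_lim; auto.
  - intro; apply box_sum_le_S; auto.
Qed.

Lemma lattice_sum_le_majorant b m : 0 < b -> m < 0 -> lattice_sum b m <= lattice_majorant b m.
Proof.
  intros Hb Hm.
  apply (is_lim_seq_le (box_sum b m) (fun _ => lattice_majorant b m)
    (lattice_sum b m) (lattice_majorant b m)).
  - intro; apply box_sum_le_majorant; auto.
  - apply lattice_sum_is_lim; auto.
  - apply is_lim_seq_const.
Qed.

Lemma bose_le_lattice_sum b m : 0 < b -> m < 0 -> bose (- b * m) <= lattice_sum b m.
Proof.
  intros Hb Hm. pose proof (box_sum_le_lattice_sum b m 0 Hb Hm) as H.
  change (box_sum b m 0) with (bose (b * (lattice_scale * 0 - m))) in H.
  replace (b * (lattice_scale * 0 - m)) with (- b * m) in H by ring. exact H.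
Qed.

Lemma inv_sub1_le_lattice_sum b m : 0 < b -> m < 0 -> / (- b * m) - 1 <= lattice_sum b m.
Proof.
  intros Hb Hm. eapply Rle_trans; [|apply bose_le_lattice_sum; auto].
  apply inv_sub1_le_bose. nra.
Qed.

Lemma lattice_sum_scal_le b m1 m2 k : 0 < b -> m1 < 0 -> m2 < 0 ->
  (forall a0 b0 c0, k * bose_term b m2 a0 b0 c0 <= bose_term b m1 a0 b0 c0) ->
  k * lattice_sum b m2 <= lattice_sum b m1.
Proof.
  intros Hb H1 H2 Hk.
  assert (Hbox : forall N, k * box_sum b m2 N <= box_sum b m1 N).
  { intro N. rewrite !box_sum_eq, <- zsum_scal. apply zsum_le. intro a.
    rewrite <- zsum_scal. apply zsum_le. intro a'.
    rewrite <- zsum_scal. apply zsum_le. intro a''. apply Hk. }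
  pose proof (is_lim_seq_le _ _ _ _ Hbox
    (is_lim_seq_scal_l _ k _ (lattice_sum_is_lim b m2 Hb H2))
    (lattice_sum_is_lim b m1 Hb H1)) as Hlim.
  exact Hlim.
Qed.

Lemma lattice_sum_le_compat b m1 m2 : 0 < b -> m1 <= m2 -> m2 < 0 ->
  lattice_sum b m1 <= lattice_sum b m2.
Proof.
  intros Hb H12 H2. rewrite <- (Rmult_1_l (lattice_sum b m1)).
  apply lattice_sum_scal_le; auto; [lra|]. intros a0 b0 c0.
  rewrite Rmult_1_l, !bose_term_eq. pose proof (bose_term_arg_ge b m2 a0 b0 c0 Hb).
  apply bose_le_contravar; nra.
Qed.

(* From [bose_sub_le], termwise [bose_term m1 >= (1 - c) bose_term m2], with
   [c = (exp (b (m2 - m1)) - 1) (1 + bose (- b bb))]. *)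
Lemma lattice_sum_sub_le b a m1 m2 bb : 0 < b -> a <= m1 -> m1 <= m2 -> m2 <= bb -> bb < 0 ->
  lattice_sum b m2 - lattice_sum b m1 <=
  (m2 - m1) * (b * exp (b * (bb - a)) * (1 + bose (- b * bb)) * lattice_sum b bb).
Proof.
  intros Hb Ha H12 H2 Hbb.
  set (d := b * (m2 - m1)). assert (Hd : 0 <= d) by (unfold d; nra).
  set (f0 := bose (- b * bb)). assert (Hf0 : 0 < f0) by (apply bose_gt0; nra).
  set (c := (exp d - 1) * (1 + f0)). pose proof (exp_ineq1_le d).
  assert (Hc : 0 <= c) by (apply Rmult_le_pos; lra).
  assert (Hcmp : (1 - c) * lattice_sum b m2 <= lattice_sum b m1).
  { apply lattice_sum_scal_le; try lra. intros a0 b0 c0. rewrite !bose_term_eq.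
    pose proof (bose_term_arg_ge b m2 a0 b0 c0 Hb).
    set (y := b * (lattice_scale * sq_norm a0 b0 c0 - m2)) in *.
    assert (Hy : - b * bb <= y) by nra.
    replace (b * (lattice_scale * sq_norm a0 b0 c0 - m1)) with (y + d) by (unfold y, d; ring).
    pose proof (bose_sub_le y d ltac:(nra) Hd).
    assert (bose y <= f0) by (apply bose_le_contravar; nra).
    pose proof (bose_gt0 y ltac:(nra)).
    assert ((exp d - 1) * (bose y * (1 + bose y)) <= c * bose y).
    { unfold c.
      replace ((exp d - 1) * (1 + f0) * bose y) with ((exp d - 1) * (bose y * (1 + f0))) by ring.
      apply Rmult_le_compat_l; [lra|]. apply Rmult_le_compat_l; lra. }
    lra. }
  assert (HL2 : lattice_sum b m2 <= lattice_sum b bb) by (apply lattice_sum_le_compat; lra).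
  assert (HL0 : 0 <= lattice_sum b m2).
  { pose proof (bose_le_lattice_sum b m2 Hb ltac:(lra)).
    pose proof (bose_gt0 (- b * m2) ltac:(nra)). lra. }
  assert (Hed : exp d - 1 <= d * exp (b * (bb - a))).
  { eapply Rle_trans; [apply exp_sub1_le_mul_exp; auto|].
    apply Rmult_le_compat_l; auto. apply exp_le_exp. unfold d. nra. }
  assert (c * lattice_sum b m2 <= d * exp (b * (bb - a)) * (1 + f0) * lattice_sum b bb).
  { unfold c. apply Rle_trans with ((exp d - 1) * (1 + f0) * lattice_sum b bb).
    - apply Rmult_le_compat_l; [apply Rmult_le_pos|]; lra.
    - apply Rmult_le_compat_r; [lra|]. apply Rmult_le_compat_r; lra. }
  unfold d in *. lra.
Qed.

Lemma lattice_sum_lipschitz b a bb : 0 < b -> bb < 0 ->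
  exists K, 0 <= K /\ forall u v, a <= u <= bb -> a <= v <= bb ->
    Rabs (lattice_sum b u - lattice_sum b v) <= K * Rabs (u - v).
Proof.
  intros Hb Hbb.
  set (K := b * exp (b * (bb - a)) * (1 + bose (- b * bb)) * lattice_sum b bb).
  assert (HK : 0 <= K).
  { pose proof (bose_gt0 (- b * bb) ltac:(nra)). pose proof (bose_le_lattice_sum b bb Hb Hbb).
    pose proof (exp_pos (b * (bb - a))). unfold K.
    repeat apply Rmult_le_pos; lra. }
  assert (Hord : forall u v, a <= u -> u <= v -> v <= bb ->
    Rabs (lattice_sum b v - lattice_sum b u) <= K * Rabs (v - u)).
  { intros u v Hu Huv Hv.
    pose proof (lattice_sum_sub_le b a u v bb Hb Hu Huv Hv Hbb).
    pose proof (lattice_sum_le_compat b u v Hb Huv ltac:(lra)).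
    rewrite !Rabs_pos_eq by lra. unfold K. lra. }
  exists K. split; [exact HK|]. intros u v Hu Hv.
  destruct (Rle_dec u v).
  - rewrite Rabs_minus_sym, (Rabs_minus_sym u v). apply Hord; lra.
  - apply Hord; lra.
Qed.

Lemma lattice_sum_ge_cube b m M : 0 < b -> m < 0 ->
  INR (2 * M + 1) ^ 3 * exp (- (3 * (b * lattice_scale) * (INR M * INR M) + - b * m))
  <= lattice_sum b m.
Proof.
  intros Hb Hm. eapply Rle_trans; [|apply (box_sum_le_lattice_sum b m M Hb Hm)].
  rewrite box_sum_eq. set (c := exp (- (3 * (b * lattice_scale) * (INR M * INR M) + - b * m))).
  set (n := INR (2 * M + 1)). replace (n ^ 3 * c) with (n * (n * (n * c))) by ring. unfold n.
  assert (Hsq : forall z, (- Z.of_nat M <= z <= Z.of_nat M)%Z -> IZR z * IZR z <= INR M * INR M).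
  { intros z Hz. rewrite INR_IZR_INZ, <- !mult_IZR. apply IZR_le. nia. }
  rewrite <- zsum_const. apply zsum_le_on. intros a0 Ha.
  rewrite <- zsum_const. apply zsum_le_on. intros b0 Hb0.
  rewrite <- zsum_const. apply zsum_le_on. intros c0 Hc0.
  rewrite bose_term_eq. pose proof lattice_scale_gt0.
  pose proof (bose_term_arg_ge b m a0 b0 c0 Hb).
  assert (Hq : sq_norm a0 b0 c0 <= 3 * (INR M * INR M)).
  { rewrite sq_norm_eq. pose proof (Hsq a0 Ha). pose proof (Hsq b0 Hb0). pose proof (Hsq c0 Hc0).
    lra. }
  eapply Rle_trans; [|apply exp_opp_le_bose; nra].
  apply exp_le_exp.
  assert (b * (lattice_scale * sq_norm a0 b0 c0) <= b * (lattice_scale * (3 * (INR M * INR M))))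
    by (apply Rmult_le_compat_l; [lra|]; apply Rmult_le_compat_l; lra).
  nra.
Qed.

(* Take the box of side [M = floor (1 / sqrt P)]: it has at least [P^(-3/2)] points,
   on each of which [b p^2 <= 3]. *)
Lemma lattice_sum_ge_inv_volume b m : 0 < b -> m < 0 ->
  exp (- (3 + - b * m)) / (b * lattice_scale * sqrt (b * lattice_scale)) <= lattice_sum b m.
Proof.
  intros Hb Hm. pose proof lattice_scale_gt0.
  set (P := b * lattice_scale). assert (HP : 0 < P) by (unfold P; nra).
  set (sP := sqrt P). assert (HsP : 0 < sP) by (apply sqrt_lt_R0; lra).
  assert (HsPP : sP * sP = P) by (apply sqrt_sqrt; lra).
  destruct (nfloor_ex (/ sP)) as [M [HM1 HM2]]; [left; apply Rinv_0_lt_compat; lra|].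
  pose proof (lattice_sum_ge_cube b m M Hb Hm) as Hcube. fold P in Hcube.
  rewrite plus_INR, mult_INR in Hcube. simpl (INR 2) in Hcube. simpl (INR 1) in Hcube.
  pose proof (pos_INR M).
  assert (HMM : P * (INR M * INR M) <= 1).
  { assert (INR M * INR M <= / sP * / sP) by (apply Rmult_le_compat; lra).
    assert (P * (/ sP * / sP) = 1) by (rewrite <- HsPP; field; lra). nra. }
  assert (Hcount : / (P * sP) <= (2 * INR M + 1) ^ 3).
  { replace (/ (P * sP)) with ((/ sP) ^ 3) by (rewrite <- HsPP; field; lra).
    apply pow_incr. split; [left; apply Rinv_0_lt_compat|]; lra. }
  eapply Rle_trans; [|exact Hcube]. unfold Rdiv. rewrite Rmult_comm.
  apply Rmult_le_compat; [left; apply Rinv_0_lt_compat; nra|left; apply exp_pos|exact Hcount|].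
  apply exp_le_exp. nra.
Qed.

Lemma lipschitz_continuity (g : R -> R) K : 0 <= K ->
  (forall x y, Rabs (g x - g y) <= K * Rabs (x - y)) -> continuity g.
Proof.
  intros HK Hlip x eps Heps. exists (eps / (K + 1)). split; [apply Rdiv_lt_0_compat; lra|].
  intros y [_ Hy]. simpl in *. unfold R_dist in *.
  eapply Rle_lt_trans; [apply Hlip|].
  apply Rle_lt_trans with (K * (eps / (K + 1))); [apply Rmult_le_compat_l; lra|].
  apply (Rmult_lt_reg_r (K + 1)); [lra|].
  replace (K * (eps / (K + 1)) * (K + 1)) with (K * eps) by (field; lra). nra.
Qed.

(* Extend [g] from [[a, b]] to all of [R] by clamping the argument, then use the IVT. *)
Lemma lipschitz_on_sign_change_root (g : R -> R) a b K : a < b -> 0 <= K ->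
  (forall u v, a <= u <= b -> a <= v <= b -> Rabs (g u - g v) <= K * Rabs (u - v)) ->
  g a < 0 -> 0 < g b -> exists z, a <= z <= b /\ g z = 0.
Proof.
  intros Hab HK Hlip Hga Hgb.
  set (clamp x := Rmax a (Rmin b x)).
  assert (Hrange : forall x, a <= clamp x <= b).
  { intro x. unfold clamp, Rmax, Rmin. destruct (Rle_dec b x);
    repeat match goal with |- context [Rle_dec ?u ?v] => destruct (Rle_dec u v) end; lra. }
  assert (Hid : forall x, a <= x <= b -> clamp x = x).
  { intros x Hx. unfold clamp, Rmax, Rmin. destruct (Rle_dec b x);
    repeat match goal with |- context [Rle_dec ?u ?v] => destruct (Rle_dec u v) end; lra. }
  assert (H1 : forall x y, Rabs (clamp x - clamp y) <= Rabs (x - y)).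
  { intros x y. unfold clamp, Rmax, Rmin. destruct (Rle_dec b x); destruct (Rle_dec b y);
    repeat match goal with |- context [Rle_dec ?u ?v] => destruct (Rle_dec u v) end;
    unfold Rabs; repeat destruct Rcase_abs; lra. }
  assert (Hcont : continuity (fun x => g (clamp x))).
  { apply (lipschitz_continuity _ K HK). intros x y.
    eapply Rle_trans; [apply Hlip; apply Hrange|]. apply Rmult_le_compat_l; auto. }
  destruct (IVT (fun x => g (clamp x)) a b Hcont Hab) as [z [Hz Hgz]];
    [rewrite Hid by lra; exact Hga|rewrite Hid by lra; exact Hgb|].
  exists z. split; [exact Hz|]. rewrite Hid in Hgz; auto.
Qed.

Lemma gap_equation_has_root beta eta v0 mu : 0 < beta -> 0 < eta -> 0 < v0 ->
  exists mt, mt < 0 /\ lattice_sum beta mt = (mu - mt) * eta / v0.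
Proof.
  intros Hb He Hv. set (r := eta / v0). assert (Hr : 0 < r) by (apply Rdiv_lt_0_compat; lra).
  set (F m := lattice_sum beta m - (mu - m) * eta / v0).
  pose proof (Rle_abs mu). pose proof (Rle_abs (- mu)). rewrite Rabs_Ropp in *.
  (* near [0] the term [p = 0] alone exceeds the right-hand side *)
  set (Q := (Rabs mu + 1) * r). assert (HQ : 0 < Q) by (unfold Q; nra).
  set (t := / (beta * (2 + Q) + 1)).
  assert (Ht : 0 < t <= 1).
  { split; [apply Rinv_0_lt_compat; nra|].
    rewrite <- Rinv_1. apply Rinv_le_contravar; nra. }
  assert (HFt : 0 < F (- t)).
  { pose proof (inv_sub1_le_lattice_sum beta (- t) Hb ltac:(lra)) as HL.
    replace (/ (- beta * - t)) with (2 + Q + / beta) in HL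
      by (unfold t; field; split; nra).
    pose proof (Rinv_0_lt_compat beta Hb).
    assert ((mu - - t) * eta / v0 <= Q) by (unfold Q, r, Rdiv in *; nra).
    unfold F. lra. }
  (* far from [0] the left-hand side stays bounded by its value at [-1] *)
  set (D := lattice_sum beta (-1)).
  assert (HD : 0 < D).
  { pose proof (bose_le_lattice_sum beta (-1) Hb ltac:(lra)).
    pose proof (bose_gt0 (- beta * -1) ltac:(nra)). unfold D. lra. }
  set (s := D / r + Rabs mu + 1).
  assert (Hs : 1 < s) by (assert (0 < D / r) by (apply Rdiv_lt_0_compat; lra); unfold s; lra).
  assert (HFs : F (- s) < 0).
  { pose proof (lattice_sum_le_compat beta (- s) (-1) Hb ltac:(lra) ltac:(lra)) as HL.
    assert ((mu - - s) * eta / v0 = D + (mu + Rabs mu + 1) * r)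
      by (unfold s, r; field; split; lra).
    assert (0 < (mu + Rabs mu + 1) * r) by (apply Rmult_lt_0_compat; lra).
    fold D in HL. unfold F. lra. }
  destruct (lattice_sum_lipschitz beta (- s) (- t) Hb ltac:(lra)) as [K [HK HKlip]].
  destruct (lipschitz_on_sign_change_root F (- s) (- t) (K + r)) as [z [Hz HFz]];
    [lra|lra| |exact HFs|exact HFt|].
  - intros u v Hu Hv'. unfold F.
    replace (lattice_sum beta u - (mu - u) * eta / v0 - (lattice_sum beta v - (mu - v) * eta / v0))
      with ((lattice_sum beta u - lattice_sum beta v) + r * (u - v)) by (unfold r; field; lra).
    eapply Rle_trans; [apply Rabs_triang|]. rewrite Rabs_mult, (Rabs_pos_eq r) by lra.
    pose proof (HKlip u v Hu Hv'). lra.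
  - exists z. split; [lra|]. unfold F in HFz. lra.
Qed.

Lemma gap_equation_unique_root beta eta v0 mu : 0 < beta -> 0 < eta -> 0 < v0 ->
  exists! mt, mt < 0 /\ lattice_sum beta mt = (mu - mt) * eta / v0.
Proof.
  intros Hb He Hv. destruct (gap_equation_has_root beta eta v0 mu Hb He Hv) as [z [Hz Hzeq]].
  exists z. split; [auto|]. intros y [Hy Hyeq].
  (* the left-hand side is nondecreasing and the right-hand side strictly decreasing in [mt] *)
  assert (Hrhs : forall u v, u < v -> (mu - v) * eta / v0 < (mu - u) * eta / v0).
  { intros u v Huv. unfold Rdiv. apply Rmult_lt_compat_r; [apply Rinv_0_lt_compat; lra|].
    apply Rmult_lt_compat_r; lra. }
  destruct (Rtotal_order z y) as [Hlt|[Heq|Hgt]]; auto.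
  - pose proof (lattice_sum_le_compat beta z y Hb ltac:(lra) Hy). pose proof (Hrhs z y Hlt). lra.
  - pose proof (lattice_sum_le_compat beta y z Hb ltac:(lra) Hz). pose proof (Hrhs y z Hgt). lra.
Qed.

Lemma Rpower_3_2 x : 0 < x -> Rpower x (3 / 2) = x * sqrt x.
Proof.
  intro Hx. replace (3 / 2) with (1 + / 2) by field.
  rewrite Rpower_plus, Rpower_1, Rpower_sqrt; auto.
Qed.

Lemma zeta32_gt0 : 0 < zeta32.
Proof.
  set (a n := / Rpower (INR n + 1) (3 / 2)).
  assert (Ha : forall n, a n = / ((INR n + 1) * sqrt (INR n + 1))).
  { intro n. unfold a. rewrite Rpower_3_2; [auto|pose proof (pos_INR n); lra]. }
  assert (Hpos : forall n, 0 < a n) by (intro n; apply Rinv_0_lt_compat, exp_pos).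
  assert (Hincr : forall n, sum_n a n <= sum_n a (S n)).
  { intro n. rewrite !sum_n_Reals, tech5. pose proof (Hpos (S n)). lra. }
  assert (Hbnd : forall n, sum_n a n <= 3).
  { intro n. rewrite sum_n_Reals, (sum_eq a _ n (fun k _ => Ha k)).
    pose proof (sum_inv_pow32_le n).
    assert (0 < 2 / sqrt (INR n + 1))
      by (apply Rdiv_lt_0_compat; [lra|apply sqrt_lt_R0; pose proof (pos_INR n); lra]).
    lra. }
  destruct (ex_finite_lim_seq_incr (sum_n a) 3 Hincr Hbnd) as [l Hl].
  unfold zeta32. fold a. rewrite (is_series_unique a l Hl).
  pose proof (is_lim_seq_incr_compare (sum_n a) l Hl Hincr 0) as H0.
  rewrite sum_n_Reals in H0. simpl in H0. pose proof (Hpos 0%nat). lra.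
Qed.

Lemma sqrt_exp y : sqrt (exp y) = exp (y / 2).
Proof.
  rewrite <- (sqrt_square (exp (y / 2))) by (left; apply exp_pos).
  rewrite <- exp_plus. f_equal. f_equal. field.
Qed.

Lemma beta_c_scaling kappa eta : 0 < kappa -> 0 < eta ->
  0 < kappa * beta_c eta /\
  kappa * beta_c eta * Rpower eta (2 / 3) = kappa / (4 * PI) * Rpower zeta32 (2 / 3) /\
  kappa * beta_c eta * lattice_scale * sqrt (kappa * beta_c eta * lattice_scale) =
    PI * kappa * sqrt (PI * kappa) * zeta32 / eta.
Proof.
  intros Hk He. pose proof zeta32_gt0 as Hz. pose proof PI_RGT_0 as Hpi.
  unfold beta_c, Rpower. set (L := ln (eta / zeta32)).
  assert (HL : L = ln eta - ln zeta32) by (apply ln_div; auto).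
  split; [|split].
  - apply Rmult_lt_0_compat; auto.
    apply Rmult_lt_0_compat; [apply Rinv_0_lt_compat; lra|apply exp_pos].
  - replace (kappa * (/ (4 * PI) * exp (- (2 / 3) * L)) * exp (2 / 3 * ln eta))
      with (kappa / (4 * PI) * (exp (- (2 / 3) * L) * exp (2 / 3 * ln eta))) by (field; lra).
    rewrite <- exp_plus, HL. do 2 f_equal. ring.
  - replace (kappa * (/ (4 * PI) * exp (- (2 / 3) * L)) * lattice_scale)
      with (PI * kappa * exp (- (2 / 3) * L)) by (unfold lattice_scale; field; lra).
    rewrite sqrt_mult, sqrt_exp by (try apply Rmult_le_pos; try left; try apply exp_pos; lra).
    replace (PI * kappa * exp (- (2 / 3) * L) * (sqrt (PI * kappa) * exp (- (2 / 3) * L / 2)))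
      with (PI * kappa * sqrt (PI * kappa) * (exp (- (2 / 3) * L) * exp (- (2 / 3) * L / 2)))
      by ring.
    rewrite <- exp_plus. replace (- (2 / 3) * L + - (2 / 3) * L / 2) with (- L) by field.
    rewrite exp_Ropp. unfold L. rewrite exp_ln by (apply Rdiv_lt_0_compat; auto).
    field. split; lra.
Qed.

Lemma Rpower_2_3_bounds eta : 1 <= eta -> 1 <= Rpower eta (2 / 3) <= eta.
Proof.
  intro He.
  assert (H0 : Rpower eta 0 = 1) by (apply Rpower_O; lra).
  assert (H1 : Rpower eta 1 = eta) by (apply Rpower_1; lra).
  split; [rewrite <- H0 at 1|rewrite <- H1 at 2]; apply Rle_Rpower; lra.
Qed.

Section ScaledRegime.

Variables kappa v0 c0 : R.
Hypothesis kappa_gt0 : 0 < kappa.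
Hypothesis v0_gt0 : 0 < v0.
Hypothesis c0_range : 0 < c0 <= 1.

(* [beta eta^(2/3)] and [1 / (eta (beta (2 pi)^2)^(3/2))] at [beta = kappa beta_c(eta)] *)
Definition scaled_beta : R := kappa / (4 * PI) * Rpower zeta32 (2 / 3).
Definition scaled_inv_volume : R := / (PI * kappa * sqrt (PI * kappa) * zeta32).

Definition gap_bulk : R :=
  v0 * (4 * exp 1 ^ 3 / scaled_beta + 12 * exp 1 ^ 3 * scaled_inv_volume).
Definition gap_max : R := gap_bulk + / c0 + 1.
Definition gap_min : R :=
  scaled_inv_volume * v0 * exp (- (3 + scaled_beta * (gap_max + / c0))).

Lemma scaled_beta_gt0 : 0 < scaled_beta.
Proof.
  pose proof PI_RGT_0. apply Rmult_lt_0_compat; [apply Rdiv_lt_0_compat; lra|apply exp_pos].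
Qed.

Lemma scaled_inv_volume_gt0 : 0 < scaled_inv_volume.
Proof.
  pose proof PI_RGT_0. pose proof zeta32_gt0. assert (0 < PI * kappa) by nra.
  assert (0 < sqrt (PI * kappa)) by (apply sqrt_lt_R0; lra).
  apply Rinv_0_lt_compat. apply Rmult_lt_0_compat; [apply Rmult_lt_0_compat|]; lra.
Qed.

Lemma inv_c0_ge1 : 1 <= / c0.
Proof. rewrite <- Rinv_1. apply Rinv_le_contravar; lra. Qed.

Lemma gap_bulk_gt0 : 0 < gap_bulk.
Proof.
  pose proof scaled_beta_gt0. pose proof scaled_inv_volume_gt0.
  assert (0 < exp 1 ^ 3) by (apply pow_lt, exp_pos).
  assert (0 < 4 * exp 1 ^ 3 / scaled_beta) by (apply Rdiv_lt_0_compat; lra).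
  assert (0 < 12 * exp 1 ^ 3 * scaled_inv_volume) by (apply Rmult_lt_0_compat; lra).
  apply Rmult_lt_0_compat; lra.
Qed.

Lemma gap_min_gt0 : 0 < gap_min.
Proof.
  pose proof scaled_inv_volume_gt0.
  pose proof (exp_pos (- (3 + scaled_beta * (gap_max + / c0)))).
  unfold gap_min. repeat apply Rmult_lt_0_compat; lra.
Qed.

Lemma inv_volume_at_beta_c eta : 0 < eta ->
  / (kappa * beta_c eta * lattice_scale * sqrt (kappa * beta_c eta * lattice_scale))
  = scaled_inv_volume * eta.
Proof.
  intro He. destruct (beta_c_scaling kappa eta kappa_gt0 He) as [_ [_ ->]].
  unfold scaled_inv_volume. pose proof PI_RGT_0. pose proof zeta32_gt0.
  assert (0 < sqrt (PI * kappa)) by (apply sqrt_lt_R0; nra).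
  field. repeat split; nra.
Qed.

Section FixedDensity.

Variables eta mu mt : R.
Hypothesis eta_ge1 : 1 <= eta.
Hypothesis mu_le : mu <= / c0.
Hypothesis mt_lt0 : mt < 0.
Hypothesis gap_eq : lattice_sum (kappa * beta_c eta) mt = (mu - mt) * eta / v0.

Lemma gap_le_max : mu - mt <= gap_max.
Proof.
  destruct (beta_c_scaling kappa eta kappa_gt0 ltac:(lra)) as [Hb [HbE _]].
  fold scaled_beta in HbE. pose proof (Rpower_2_3_bounds eta eta_ge1) as HE.
  pose proof scaled_beta_gt0. pose proof scaled_inv_volume_gt0. pose proof gap_bulk_gt0.
  pose proof inv_c0_ge1.
  pose proof (lattice_sum_le_majorant _ mt Hb mt_lt0) as Hmaj.
  unfold lattice_majorant, Rdiv in Hmaj. rewrite inv_volume_at_beta_c, gap_eq in Hmaj by lra.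
  set (b := kappa * beta_c eta) in *. set (E := Rpower eta (2 / 3)) in *.
  destruct (Rle_dec mt (-1)) as [Hm1|Hm1]; [|unfold gap_max; lra].
  assert (Hbose : bose (- b * mt) <= eta / scaled_beta).
  { eapply Rle_trans; [apply bose_le_inv; nra|].
    apply Rle_trans with (/ b); [apply Rinv_le_contravar; nra|].
    replace (/ b) with (E / scaled_beta) by (rewrite <- HbE; field; lra).
    apply Rmult_le_compat_r; [left; apply Rinv_0_lt_compat|]; lra. }
  assert (0 < exp 1 ^ 3) by (apply pow_lt, exp_pos).
  apply Rle_trans with gap_bulk; [|unfold gap_max; lra].
  apply (Rmult_le_reg_r (eta / v0)); [apply Rdiv_lt_0_compat; lra|].
  replace (gap_bulk * (eta / v0))
    with (4 * exp 1 ^ 3 * (eta / scaled_beta) + 12 * exp 1 ^ 3 * (scaled_inv_volume * eta))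
    by (unfold gap_bulk; field; lra).
  replace ((mu - mt) * (eta / v0)) with ((mu - mt) * eta * / v0) by (field; lra).
  assert (4 * exp 1 ^ 3 * bose (- b * mt) <= 4 * exp 1 ^ 3 * (eta / scaled_beta))
    by (apply Rmult_le_compat_l; lra).
  lra.
Qed.

Hypothesis mu_ge : - / c0 * Rpower eta (2 / 3) <= mu.

Lemma gap_ge_min : gap_min <= mu - mt.
Proof.
  destruct (beta_c_scaling kappa eta kappa_gt0 ltac:(lra)) as [Hb [HbE _]].
  fold scaled_beta in HbE. pose proof (Rpower_2_3_bounds eta eta_ge1) as HE.
  pose proof scaled_beta_gt0. pose proof scaled_inv_volume_gt0. pose proof gap_bulk_gt0.
  pose proof inv_c0_ge1. pose proof gap_le_max as Hmax.
  pose proof (inv_volume_at_beta_c eta ltac:(lra)) as Hvolume.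
  set (b := kappa * beta_c eta) in *. set (E := Rpower eta (2 / 3)) in *.
  (* [- b mt = b (mu - mt) - b mu] is bounded because [b E] is constant *)
  assert (Hx : - b * mt <= scaled_beta * (gap_max + / c0)).
  { replace (- b * mt) with (b * (mu - mt) + b * - mu) by ring.
    assert (b * (mu - mt) <= scaled_beta / E * gap_max).
    { replace (scaled_beta / E) with b by (rewrite <- HbE; field; lra).
      apply Rmult_le_compat_l; lra. }
    assert (scaled_beta / E * gap_max <= scaled_beta * gap_max).
    { apply Rmult_le_compat_r; [unfold gap_max; lra|]. unfold Rdiv.
      rewrite <- (Rmult_1_r scaled_beta) at 2. apply Rmult_le_compat_l; [lra|].
      rewrite <- Rinv_1. apply Rinv_le_contravar; lra. }
    assert (b * - mu <= b * (/ c0 * E)) by (apply Rmult_le_compat_l; lra).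
    replace (b * (/ c0 * E)) with (scaled_beta / c0) in * by (rewrite <- HbE; field; lra).
    unfold Rdiv in *. lra. }
  pose proof (lattice_sum_ge_inv_volume b mt Hb mt_lt0) as Hvol. unfold Rdiv in Hvol.
  rewrite Hvolume, gap_eq in Hvol.
  set (X := scaled_beta * (gap_max + / c0)) in *.
  assert (Hexp : exp (- (3 + X)) <= exp (- (3 + - b * mt))) by (apply exp_le_exp; lra).
  apply (Rmult_le_reg_r (eta / v0)); [apply Rdiv_lt_0_compat; lra|].
  unfold gap_min. fold X.
  replace (scaled_inv_volume * v0 * exp (- (3 + X)) * (eta / v0))
    with (exp (- (3 + X)) * (scaled_inv_volume * eta)) by (field; lra).
  replace ((mu - mt) * (eta / v0)) with ((mu - mt) * eta * / v0) by (field; lra).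
  eapply Rle_trans; [|exact Hvol]. apply Rmult_le_compat_r; [|exact Hexp].
  apply Rmult_le_pos; lra.
Qed.

End FixedDensity.

Lemma scaled_gap_bounds :
  exists c C eta0 : R, 0 < c <= 1 /\ 0 < C /\ 0 < eta0 /\
    forall eta mu mt : R, eta0 <= eta ->
      - / c0 * Rpower eta (2 / 3) <= mu <= / c0 ->
      mt < 0 ->
      lattice_sum (kappa * beta_c eta) mt = (mu - mt) * eta / v0 ->
      (c <= mu - mt <= / c) /\
      (0 <= mu -> - mt <= C) /\
      (mu < 0 -> - mt <= C * Rpower eta (2 / 3)) /\
      (c * eta <= lattice_sum (kappa * beta_c eta) mt <= / c * eta).
Proof.
  pose proof gap_min_gt0. pose proof gap_bulk_gt0. pose proof inv_c0_ge1.
  assert (Hmax : 1 < gap_max) by (unfold gap_max; lra).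
  set (c := Rmin (Rmin 1 gap_min) (Rmin (gap_min / v0) (Rmin (/ gap_max) (v0 / gap_max)))).
  assert (Hc : 0 < c).
  { unfold c. repeat apply Rmin_glb_lt; try lra;
      try apply Rdiv_lt_0_compat; try apply Rinv_0_lt_compat; lra. }
  assert (Hc1 : c <= 1) by (unfold c; eapply Rle_trans; [apply Rmin_l|apply Rmin_l]).
  assert (Hc_min : c <= gap_min) by (unfold c; eapply Rle_trans; [apply Rmin_l|apply Rmin_r]).
  assert (Hc_minv : c <= gap_min / v0)
    by (unfold c; eapply Rle_trans; [apply Rmin_r|apply Rmin_l]).
  assert (Hc_max : c <= / gap_max)
    by (unfold c; do 2 (eapply Rle_trans; [apply Rmin_r|]); apply Rmin_l).
  assert (Hc_maxv : c <= v0 / gap_max)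
    by (unfold c; do 2 (eapply Rle_trans; [apply Rmin_r|]); apply Rmin_r).
  assert (Hinv : forall x, 0 < x -> c <= / x -> x <= / c).
  { intros x Hx Hcx. rewrite <- (Rinv_inv x). apply Rinv_le_contravar; auto. }
  pose proof (Hinv gap_max ltac:(lra) Hc_max) as Hmax_c.
  pose proof (Hinv (gap_max / v0) (Rdiv_lt_0_compat gap_max v0 ltac:(lra) v0_gt0)) as Hmaxv_c.
  rewrite Rinv_div in Hmaxv_c. specialize (Hmaxv_c Hc_maxv).
  exists c, (gap_max + / c0), 1. split; [lra|]. split; [lra|]. split; [lra|].
  intros eta mu mt He [Hmu1 Hmu2] Hmt Heq.
  pose proof (gap_le_max eta mu mt He Hmu2 Hmt Heq) as HDmax.
  pose proof (gap_ge_min eta mu mt He Hmu2 Hmt Heq Hmu1) as HDmin.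
  pose proof (Rpower_2_3_bounds eta He) as HE.
  rewrite Heq. replace ((mu - mt) * eta / v0) with ((mu - mt) / v0 * eta) by (field; lra).
  assert (Hdiv : gap_min / v0 <= (mu - mt) / v0 <= gap_max / v0).
  { split; apply Rmult_le_compat_r; try (left; apply Rinv_0_lt_compat); lra. }
  split; [lra|]. split; [lra|]. split.
  - intro Hmu. nra.
  - split; apply Rmult_le_compat_r; lra.
Qed.

End ScaledRegime.

Theorem lemmaA1 :
  (* (a) *)
  (forall beta eta v0 mu : R, 0 < beta -> 0 < eta -> 0 < v0 ->
     exists! mt : R, mt < 0 /\ lattice_sum beta mt = (mu - mt) * eta / v0)
  /\
  (* (b) and (c) *)
  (forall kappa v0 c0 : R, 0 < kappa -> 0 < v0 -> 0 < c0 <= 1 ->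
     exists c C eta0 : R, 0 < c <= 1 /\ 0 < C /\ 0 < eta0 /\
       forall eta mu mt : R, eta0 <= eta ->
         - / c0 * Rpower eta (2 / 3) <= mu <= / c0 ->
         mt < 0 ->
         lattice_sum (kappa * beta_c eta) mt = (mu - mt) * eta / v0 ->
         (c <= mu - mt <= / c) /\
         (0 <= mu -> - mt <= C) /\
         (mu < 0 -> - mt <= C * Rpower eta (2 / 3)) /\
         (c * eta <= lattice_sum (kappa * beta_c eta) mt <= / c * eta)).
Proof.
  split.
  - exact gap_equation_unique_root.
  - exact scaled_gap_bounds.
Qed.
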